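(* Let $R$ be a principal ideal domain and let $Ra$ be a left ideal of $R$ that is not a two-sided ideal. Then $Ra$ is weakly prime if and only if $a$ has no non-unit invariant factor. Equivalently, $Ra$ is weakly prime if and only if $Ra$ is not contained in any proper two-sided ideal of $R$.
   Context: A principal ideal domain (PID) is a (not necessarily commutative) domain in which every left ideal and every right ideal is principal. A left ideal $\mathfrak{p}$ is weakly prime if $\mathfrak{p}\neq R$ and, for left ideals $A,B$, $AB\subseteq\mathfrak{p}$ and $\mathfrak{p}B\subseteq\mathfrak{p}$ imply $A\subseteq\mathfrak{p}$ or $B\subseteq\mathfrak{p}$. A nonzero $c$ is invariant if $Rc=cR$. $c$ is a factor of $a$ if $a=rcs$ for some $r,s\in R$. *)

From HB Require Import structures.
From mathcomp Require Import all_boot all_order all_algebra.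
Set Implicit Arguments. Unset Strict Implicit. Unset Printing Implicit Defensive.
Import GRing.Theory.
Local Open Scope ring_scope.

Section Defs.
Variable R : unitRingType.

Definition subset_of (A B : R -> Prop) : Prop := forall x, A x -> B x.

Definition is_left_ideal (I : R -> Prop) : Prop :=
  I 0 /\ (forall x y, I x -> I y -> I (x + y)) /\ (forall r x, I x -> I (r * x)).

Definition is_right_ideal (I : R -> Prop) : Prop :=
  I 0 /\ (forall x y, I x -> I y -> I (x + y)) /\ (forall r x, I x -> I (x * r)).

Definition is_two_sided_ideal (I : R -> Prop) : Prop :=
  is_left_ideal I /\ is_right_ideal I.

Definition lprinc (a : R) : R -> Prop := fun x => exists r, x = r * a.
Definition rprinc (a : R) : R -> Prop := fun x => exists r, x = a * r.

Definition is_domain : Prop := forall x y : R, x * y = 0 -> x = 0 \/ y = 0.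

Definition is_PID : Prop :=
  is_domain /\
  (forall I, is_left_ideal I -> exists a, forall x, I x <-> lprinc a x) /\
  (forall I, is_right_ideal I -> exists a, forall x, I x <-> rprinc a x).

Definition prod_ideal (A B : R -> Prop) : R -> Prop :=
  fun x => exists s : seq (R * R),
    (forall p, p \in s -> A p.1 /\ B p.2) /\ x = \sum_(p <- s) (p.1 * p.2).

Definition proper_set (I : R -> Prop) : Prop := exists x, ~ I x.

Definition weakly_prime (P : R -> Prop) : Prop :=
  is_left_ideal P /\ proper_set P /\
  forall A B, is_left_ideal A -> is_left_ideal B ->
    subset_of (prod_ideal A B) P -> subset_of (prod_ideal P B) P ->
    subset_of A P \/ subset_of B P.

Definition invariant_elt (c : R) : Prop :=
  c <> 0 /\ forall x, lprinc c x <-> rprinc c x.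

Definition factor_of (c a : R) : Prop := exists r s, a = r * c * s.

End Defs.

(* Write P := R a, which is not two-sided, so a <> 0.
   If c is a non-unit invariant factor of a then R c is a proper two-sided
   ideal containing P; conversely a proper two-sided ideal I above P is
   R c = d R, comparing generators gives c = w d with w a unit, so
   R d = I = d R and d is a non-unit invariant factor of a.
   A non-unit invariant factor c of a, say a = b c = c b', refutes weak
   primality with A := R c and B := {x | c x in P}: A B and P B lie in P,
   A in P would make P two-sided, and B in P would make c a unit.
   Conversely, if P B lies in P then {y | y R B in P} is a two-sided ideal
   containing P; when no proper two-sided ideal contains P it contains 1,
   so B lies in P. *)

From mathcomp Require Import all_boot all_order all_algebra.
From Stdlib Require Import Classical.
Import GRing.Theory.
Local Open Scope ring_scope.

Section WeaklyPrimeLeftIdeals.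
Context {R : unitRingType}.
Implicit Types (a x : R) (I J P B : R -> Prop).

Definition has_nonunit_invariant_factor a : Prop :=
  exists c, invariant_elt c /\ ~ (c \is a GRing.unit) /\ factor_of c a.

Definition in_proper_two_sided_ideal J : Prop :=
  exists I, is_two_sided_ideal I /\ proper_set I /\ subset_of J I.

Lemma lprinc_left_ideal a : is_left_ideal (lprinc a).
Proof.
split; first by exists 0; rewrite mul0r.
split; first by move=> _ _ [r ->] [s ->]; exists (r + s); rewrite mulrDl.
by move=> r _ [s ->]; exists (r * s); rewrite mulrA.
Qed.

Lemma left_ideal_full {I} x : is_left_ideal I -> I 1 -> I x.
Proof. by move=> [_ [_ IM]] I1; rewrite -[x]mulr1; apply: IM. Qed.

Lemma left_ideal_full_two_sided I :
  is_left_ideal I -> I 1 -> is_two_sided_ideal I.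
Proof.
move=> IL I1; split=> //; split; first exact: IL.1.
by split; [exact: IL.2.1 | move=> r x _; apply: left_ideal_full].
Qed.

Lemma lprinc_not_two_sided_neq0 {a} : ~ is_two_sided_ideal (lprinc a) -> a <> 0.
Proof.
move=> nts a0; apply: nts; have PL := lprinc_left_ideal a.
split=> //; split; first exact: PL.1; split; first exact: PL.2.1.
by move=> r _ [s ->]; exists 0; rewrite a0 !mulr0 mul0r.
Qed.

Lemma lprinc_proper a : ~ is_two_sided_ideal (lprinc a) -> proper_set (lprinc a).
Proof.
move=> nts; exists 1 => P1; apply: nts.
exact: left_ideal_full_two_sided (lprinc_left_ideal a) P1.
Qed.

Lemma prod_ideal_sub (A : R -> Prop) B P : is_left_ideal P ->
  (forall x y, A x -> B y -> P (x * y)) -> subset_of (prod_ideal A B) P.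
Proof.
move=> [P0 [PD _]] PAB _ [s [sAB ->]]; elim: s sAB => [|q s IHs] sAB.
  by rewrite big_nil.
rewrite big_cons; apply: PD; first by have [] := sAB q (mem_head q s); apply: PAB.
by apply: IHs => p ps; apply: sAB; rewrite inE ps orbT.
Qed.

Section Invariant.
Context {c : R} (c_inv : invariant_elt c).

Lemma invariant_mulr r : exists u, c * r = u * c.
Proof. by apply/c_inv.2; exists r. Qed.

Lemma invariant_mull r : exists u, r * c = c * u.
Proof. by apply/c_inv.2; exists r. Qed.

Lemma invariant_lprinc_two_sided : is_two_sided_ideal (lprinc c).
Proof.
split; first exact: lprinc_left_ideal.
split; first exact: (lprinc_left_ideal c).1.
split; first exact: (lprinc_left_ideal c).2.1.
move=> r _ [t ->]; have [u cr] := invariant_mulr r.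
by exists (t * u); rewrite -mulrA cr mulrA.
Qed.

Lemma invariant_lprinc1_unit : lprinc c 1 -> c \is a GRing.unit.
Proof.
move=> [u uc]; have [v cv] : rprinc c 1 by apply/c_inv.2; exists u.
apply/unitrP; exists u; split=> //.
suff -> : u = v by [].
by rewrite -[u]mulr1 cv mulrA -uc mul1r.
Qed.

Lemma invariant_factor_lprinc {a : R} : factor_of c a -> lprinc c a.
Proof.
move=> [r [s ->]]; have [t cs] := invariant_mulr s.
by exists (r * t); rewrite -mulrA cs mulrA.
Qed.

End Invariant.

Section Domain.
Hypothesis R_domain : is_domain R.

Lemma domain_mulIf {c x y : R} : c <> 0 -> x * c = y * c -> x = y.
Proof.
move=> c0 e; have : (x - y) * c = 0 by rewrite mulrBl e subrr.
by case/R_domain => // /eqP; rewrite subr_eq0 => /eqP.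
Qed.

Lemma domain_mul_eq1C {x y : R} : x * y = 1 -> y * x = 1.
Proof.
move=> xy; have y0 : y <> 0.
  by move=> y0; move: xy; rewrite y0 mulr0 => /eqP; rewrite eq_sym oner_eq0.
by apply: (domain_mulIf y0); rewrite -mulrA xy mulr1 mul1r.
Qed.

Lemma domain_mul_eq1_unitl {x y : R} : x * y = 1 -> x \is a GRing.unit.
Proof.
by move=> xy; apply/unitrP; exists y; split=> //; apply: domain_mul_eq1C.
Qed.

End Domain.

Lemma nonunit_invariant_factor_in_proper_ideal a :
  has_nonunit_invariant_factor a -> in_proper_two_sided_ideal (lprinc a).
Proof.
move=> [c [c_inv [c_nunit ca]]]; exists (lprinc c).
split; first exact: invariant_lprinc_two_sided.
split; first by exists 1 => /(invariant_lprinc1_unit c_inv).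
have [r ->] := invariant_factor_lprinc c_inv ca.
by move=> _ [s ->]; exists (s * r); rewrite mulrA.
Qed.

Lemma PID_two_sided_ideal_invariant {I} {x0 : R} :
  is_PID R -> is_two_sided_ideal I -> I x0 -> x0 <> 0 ->
  exists d, invariant_elt d /\ forall x, I x <-> lprinc d x.
Proof.
move=> [dom [lPID rPID]] [IL IR] Ix0 x00.
have [c Ic] := lPID I IL; have [d Id] := rPID I IR.
have c0 : c <> 0 by move=> c0; have [r] := (Ic x0).1 Ix0; rewrite c0 mulr0.
have [u cdu] : rprinc d c by apply/Id/Ic; exists 1; rewrite mul1r.
have [v dvc] : lprinc c d by apply/Ic/Id; exists 1; rewrite mulr1.
have [w cuw] : lprinc c (c * u).
  by apply/Ic; apply: IR.2.2; apply/Ic; exists 1; rewrite mul1r.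
have vw1 : v * w = 1.
  by apply: (domain_mulIf dom c0); rewrite mul1r -mulrA -cuw mulrA -dvc -cdu.
have cwd : c = w * d by rewrite dvc mulrA (domain_mul_eq1C dom vw1) mul1r.
have I_lprinc_d x : I x <-> lprinc d x.
  split; first by move/Ic=> [r ->]; exists (r * w); rewrite -mulrA -cwd.
  by move=> [r ->]; apply: IL.2.2; apply/Id; exists 1; rewrite mulr1.
exists d; split=> //; split; first by move=> d0; apply: c0; rewrite cwd d0 mulr0.
by move=> x; rewrite -I_lprinc_d Id.
Qed.

Lemma in_proper_ideal_nonunit_invariant_factor a : is_PID R -> a <> 0 ->
  in_proper_two_sided_ideal (lprinc a) -> has_nonunit_invariant_factor a.
Proof.
move=> PID a0 [I [Its [[x0 nIx0] aI]]].
have Ia : I a by apply: aI; exists 1; rewrite mul1r.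
have [d [d_inv Id]] := PID_two_sided_ideal_invariant PID Its Ia a0.
exists d; split=> //; split.
  move=> d_unit; apply/nIx0/(left_ideal_full _ Its.1)/Id.
  by exists d^-1; rewrite mulVr.
by have [r ->] := (Id a).1 Ia; exists r, 1; rewrite mulr1.
Qed.

Lemma nonunit_invariant_factor_not_weakly_prime a : is_domain R ->
  ~ is_two_sided_ideal (lprinc a) -> has_nonunit_invariant_factor a ->
  ~ weakly_prime (lprinc a).
Proof.
move=> dom nts [c [c_inv [c_nunit ca]]] [_ [_ wp]].
have a0 := lprinc_not_two_sided_neq0 nts.
have [b abc] := invariant_factor_lprinc c_inv ca.
have [b' acb'] := invariant_mull c_inv b; rewrite -abc in acb'.
have PL := lprinc_left_ideal a.
pose B x := lprinc a (c * x).
have BL : is_left_ideal B.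
  split; first by rewrite /B mulr0; exact: PL.1.
  split; first by move=> x y Bx By; rewrite /B mulrDr; apply: PL.2.1.
  move=> r x Bx; have [u cr] := invariant_mulr c_inv r.
  by rewrite /B mulrA cr -mulrA; apply: PL.2.2.
have AB_P : subset_of (prod_ideal (lprinc c) B) (lprinc a).
  apply: prod_ideal_sub => // _ y [u ->] By.
  by rewrite -mulrA; apply: PL.2.2.
have PB_P : subset_of (prod_ideal (lprinc a) B) (lprinc a).
  apply: prod_ideal_sub => // _ y [u ->] By.
  by rewrite -mulrA [in a * y]abc -!mulrA mulrA; apply: PL.2.2.
case: (wp _ _ (lprinc_left_ideal c) BL AB_P PB_P) => [A_P | B_P].
  have [u cua] := A_P c (ex_intro _ 1 (esym (mul1r c))).
  apply: nts; split=> //; split; first exact: PL.1; split; first exact: PL.2.1.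
  move=> y _ [q ->]; have [v cy] := invariant_mulr c_inv y.
  by exists (q * b * v * u); rewrite -mulrA [in a * y]abc -mulrA cy cua !mulrA.
have [u b'ua] : lprinc a b'.
  by apply: B_P; rewrite /B -acb'; exists 1; rewrite mul1r.
apply/c_nunit/(domain_mul_eq1_unitl dom (y := u))/(domain_mulIf dom a0).
by rewrite mul1r -mulrA -b'ua -acb'.
Qed.

Definition colon_ideal P B : R -> Prop :=
  fun y => forall r z, B z -> P (y * r * z).

Lemma colon_ideal_two_sided P B :
  is_left_ideal P -> is_two_sided_ideal (colon_ideal P B).
Proof.
move=> [P0 [PD PM]]; have C0 : colon_ideal P B 0 by move=> r z _; rewrite !mul0r.
have CD x y : colon_ideal P B x -> colon_ideal P B y -> colon_ideal P B (x + y).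
  by move=> Cx Cy r z Bz; rewrite !mulrDl; apply: PD; [apply: Cx | apply: Cy].
split; split=> //; split=> // r x Cx s z Bz.
  by rewrite -!mulrA; apply: PM; rewrite !mulrA; apply: Cx.
by rewrite -(mulrA x); apply: Cx.
Qed.

Lemma colon_ideal_sup P B : is_left_ideal B ->
  subset_of (prod_ideal P B) P -> subset_of P (colon_ideal P B).
Proof.
move=> BL PB_P y Py r z Bz; apply: PB_P; exists [:: (y, r * z)]; split.
  by move=> q; rewrite inE => /eqP -> /=; split=> //; apply: BL.2.2.
by rewrite big_seq1 /= mulrA.
Qed.

Lemma not_in_proper_ideal_weakly_prime a : ~ is_two_sided_ideal (lprinc a) ->
  ~ in_proper_two_sided_ideal (lprinc a) -> weakly_prime (lprinc a).
Proof.
move=> nts nproper; have PL := lprinc_left_ideal a.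
split=> //; split; first exact: lprinc_proper.
move=> A B _ BL _ PB_P; right.
have [C1 | nC1] := classic (colon_ideal (lprinc a) B 1).
  by move=> z Bz; have := C1 1 z Bz; rewrite !mul1r.
case: nproper; exists (colon_ideal (lprinc a) B).
split; first exact: colon_ideal_two_sided.
by split; [exists 1 | apply: colon_ideal_sup].
Qed.

End WeaklyPrimeLeftIdeals.

Theorem proposition3p17 (R : unitRingType) (a : R) :
  is_PID R ->
  ~ is_two_sided_ideal (lprinc a) ->
  (weakly_prime (lprinc a) <->
     ~ (exists c : R, invariant_elt c /\ ~ (c \is a GRing.unit) /\ factor_of c a)) /\
  (weakly_prime (lprinc a) <->
     ~ (exists I : R -> Prop, is_two_sided_ideal I /\ proper_set I /\
          subset_of (lprinc a) I)).
Proof.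
move=> PID nts.
have a0 := lprinc_not_two_sided_neq0 nts.
have FC := nonunit_invariant_factor_in_proper_ideal a.
have CF := in_proper_ideal_nonunit_invariant_factor a PID a0.
have FnW := nonunit_invariant_factor_not_weakly_prime a PID.1 nts.
have nCW := not_in_proper_ideal_weakly_prime a nts.
change ((weakly_prime (lprinc a) <-> ~ has_nonunit_invariant_factor a) /\
        (weakly_prime (lprinc a) <-> ~ in_proper_two_sided_ideal (lprinc a))).
tauto.
Qed.
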